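(* The three linear orders $I_{even}$, $I_{odd}$ and $I$ are pairwise non-isomorphic.
   Context: Ordinal exponents have their usual ordinal meaning, with $\omega^\omega=\sup_{n<\omega}\omega^n$; $kZ$ denotes $k$ consecutive copies of the order $Z$. The $\omega^*$-sum $\cdots+M_2+M_1$ has $M_{k+1}$ entirely to the left of $M_k$. For $n\ge 0$ let $L_n=\cdots+3\omega^{n+3}+2\omega^{n+2}+\omega^{n+1}+\omega^\omega$ (the $\omega^*$-sum whose $k$-th summand from the right, $k\ge1$, is $k\,\omega^{n+k}$, followed by $\omega^\omega$), and for $n\ge1$ let $L_{-n}=\cdots+(n+3)\omega^{3}+(n+2)\omega^{2}+(n+1)\omega+\omega^\omega$ (the $\omega^*$-sum whose $k$-th summand from the right is $(n+k)\omega^k$, followed by $\omega^\omega$). For orders $M_i$ ($i\in\mathbb{Z}$), $\cdots+M_{-1}+M_0+M_1+\cdots$ denotes the $\mathbb{Z}$-indexed ordered sum. Define \[ I_{even}=\cdots+L_{-2}+L_0+L_2+\cdots,\quad I_{odd}=\cdots+L_{-1}+L_1+L_3+\cdots,\quad I=\cdots+L_{-1}+L_0+L_1+\cdots, \] the $\mathbb{Z}$-sums of the $L_i$ over even $i$, odd $i$, and all $i$ respectively, in increasing order of index. *)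

From mathcomp Require Import all_boot all_order all_algebra.
Set Implicit Arguments. Unset Strict Implicit. Unset Printing Implicit Defensive.
Import Order.TTheory GRing.Theory Num.Theory.

Record linord := LinOrd { lo_car : Type; lo_lt : lo_car -> lo_car -> Prop }.

Definition order_iso (A B : linord) : Prop :=
  exists f : lo_car A -> lo_car B,
    bijective f /\ forall x y, lo_lt x y <-> lo_lt (f x) (f y).

(* The ordinal  omega^(m-1)*a_(m-1) + ... + omega*a_1 + a_0  is represented
   by s = [:: a_0; ...; a_(m-1)] with a_(m-1) <> 0 (the empty list is 0). *)
Definition cnf_normal (s : seq nat) : bool := last 1%N s != 0%N.

Fixpoint lexlt (s t : seq nat) : bool :=
  match s, t with
  | a :: s', b :: t' => (a < b)%N || ((a == b) && lexlt s' t')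
  | _, _ => false
  end.

Definition cnf_lt (s t : seq nat) : bool :=
  (size s < size t)%N || ((size s == size t) && lexlt (rev s) (rev t)).

(* An ordinal x is < omega^e (e finite) iff its normal form has size <= e. *)

(* For i >= 0 the k-th summand (k >= 1) from the right is k*omega^(i+k);
   for i = -n < 0 it is (n+k)*omega^k.  Uniformly: c(i,k) copies of omega^(e(i,k)). *)
Definition Lcoef (i : int) (k : nat) : nat :=
  (k + (if (i < 0)%R then `|i| else 0))%N.
Definition Lexp (i : int) (k : nat) : nat :=
  (k + (if (0 <= i)%R then `|i| else 0))%N.

(* Elements of L_i: either LTop x, x in the final omega^omega summand,
   or LSum k j x: the element x of the j-th copy (j < c(i,k)) of omega^(e(i,k))
   in the k-th summand from the right. *)
Inductive Lelt := LTop of seq nat | LSum of nat & nat & seq nat.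

Definition Lvalid (i : int) (p : Lelt) : bool :=
  match p with
  | LTop x => cnf_normal x
  | LSum k j x => [&& (0 < k)%N, (j < Lcoef i k)%N, cnf_normal x & (size x <= Lexp i k)%N]
  end.

(* Order within a fixed L_i: omega^*-sum (larger k is further left),
   k copies in increasing j, then ordinal order; omega^omega summand last. *)
Definition Llt (p q : Lelt) : bool :=
  match p, q with
  | LSum k j x, LSum k' j' x' =>
      (k' < k)%N || ((k == k') && ((j < j')%N || ((j == j') && cnf_lt x x')))
  | LSum _ _ _, LTop _ => true
  | LTop _, LSum _ _ _ => false
  | LTop x, LTop y => cnf_lt x y
  end.

Definition Zsum_car (P : int -> bool) : Type :=
  { q : int * Lelt | P q.1 && Lvalid q.1 q.2 }.

Definition Zsum_lt (P : int -> bool) (a b : Zsum_car P) : Prop :=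
  let (i, p) := proj1_sig a in
  let (i', p') := proj1_sig b in
  ((i < i')%R || ((i == i') && Llt p p')) = true.

Definition Zsum (P : int -> bool) : linord := @LinOrd (Zsum_car P) (@Zsum_lt P).

Definition I_even : linord := Zsum (fun i => ~~ odd `|i|).
Definition I_odd  : linord := Zsum (fun i => odd `|i|).
Definition I_all  : linord := Zsum (fun _ => true).

(** A point [x] of a linear order is a [d]-fold limit if every [y < x] is
    followed, before [x], by a [(d-1)]-fold limit; its limit degree is the
    largest such [d].  Stepping from a point to the greatest smaller point of
    at least the same degree gives a descending walk determined by the order
    alone.  In [L_i] this walk, from any starting point, eventually runs
    leftwards through the starting points of the copies in the omega^*-part;
    those of degree [D] are the starts of all but the leftmost copy of
    [omega^D] together with the start of the summand to its right, [D - i]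
    points in all (for [D] large).  Hence "some descending walk spends exactly
    [D - j] consecutive steps at degree [D], for all large [D]" is an order
    invariant, and it holds in the sum of the [L_i] over [i] in [P] exactly
    when [P j].  With [j = 1] it separates [I_odd] and [I] from [I_even], with
    [j = 0] it separates [I] from [I_odd]. *)

From mathcomp Require Import all_boot all_order all_algebra.
From mathcomp Require Import zify.
Set Implicit Arguments. Unset Strict Implicit. Unset Printing Implicit Defensive.
Import Order.TTheory GRing.Theory Num.Theory.

(** * Limit degrees and descending walks in a linear order *)

Fixpoint is_lim (X : linord) (d : nat) (x : lo_car X) : Prop :=
  match d with
  | 0 => True
  | d'.+1 => forall y, lo_lt y x -> exists z, lo_lt y z /\ lo_lt z x /\ is_lim d' z
  end.

Definition lim_deg (X : linord) (x : lo_car X) (D : nat) : Prop :=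
  is_lim D x /\ ~ is_lim D.+1 x.

Definition prev_step (X : linord) (w v : lo_car X) : Prop :=
  exists D, [/\ lim_deg v D, lo_lt w v, is_lim D w &
                forall z, lo_lt w z -> lo_lt z v -> ~ is_lim D z].

(* [T D] is the time at which the walk [v] enters degree [D]. *)
Definition walk_offset (X : linord) (j : int) : Prop :=
  exists (v : nat -> lo_car X) (D0 : nat) (T : nat -> nat),
    (forall t, prev_step (v t.+1) (v t)) /\
    forall D, (D0 <= D)%N ->
      ((T D.+1)%:Z = (T D)%:Z + D%:Z - j)%R /\
      forall t, lim_deg (v t) D <-> (T D <= t < T D.+1)%N.

Section OrderIso.
Variables (X Y : linord) (f : lo_car X -> lo_car Y) (g : lo_car Y -> lo_car X).
Hypotheses (fK : cancel f g) (gK : cancel g f).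
Hypothesis f_lt : forall x y, lo_lt x y <-> lo_lt (f x) (f y).

Lemma g_lt x y : lo_lt x y <-> lo_lt (g x) (g y).
Proof. by rewrite f_lt !gK. Qed.

Lemma is_lim_iso d x : is_lim d x <-> is_lim d (f x).
Proof.
elim: d x => [|d IH] x //=; split.
- move=> limx y yfx.
  have gyx : lo_lt (g y) x by rewrite -(fK x); apply/g_lt.
  have [z [yz [zx limz]]] := limx _ gyx.
  exists (f z); split; last split.
  + by apply/g_lt; rewrite fK.
  + exact/f_lt.
  + exact/IH.
- move=> limfx y /f_lt /limfx [z [yz [zx limz]]].
  exists (g z); split; last split.
  + by apply/f_lt; rewrite gK.
  + by apply/f_lt; rewrite gK.
  + by apply/IH; rewrite gK.
Qed.

Lemma lim_deg_iso x D : lim_deg x D <-> lim_deg (f x) D.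
Proof. by rewrite /lim_deg !is_lim_iso. Qed.

Lemma prev_step_iso w v : prev_step w v -> prev_step (f w) (f v).
Proof.
case=> D [degv wv limw nolim]; exists D; split.
- exact/lim_deg_iso.
- exact/f_lt.
- exact/is_lim_iso.
- move=> z /g_lt + /g_lt; rewrite !fK => wz zv.
  by rewrite -(gK z) -is_lim_iso; apply: nolim.
Qed.

Lemma walk_offset_iso j : walk_offset X j -> walk_offset Y j.
Proof.
case=> v [D0 [T [steps blocks]]]; exists (f \o v), D0, T; split.
  by move=> t; apply: prev_step_iso.
by move=> D /blocks [lenD degD]; split=> // t; rewrite -degD lim_deg_iso.
Qed.
End OrderIso.

Lemma order_iso_walk_offset (X Y : linord) j :
  order_iso X Y -> (walk_offset X j <-> walk_offset Y j).
Proof.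
case=> f [[g fK gK] f_lt]; split; first exact: (@walk_offset_iso X Y f g fK gK f_lt j).
by apply: (@walk_offset_iso Y X g f gK fK) => x y; rewrite f_lt !gK.
Qed.

Lemma nat_interval_inj (a b a' b' : nat) : (a < b)%N -> (a' < b')%N ->
  (forall t, (a <= t < b)%N <-> (a' <= t < b')%N) -> a = a' /\ b = b'.
Proof.
move=> ltab ltab' eq_int.
have := eq_int a; have := eq_int a'; have := eq_int b.-1; have := eq_int b'.-1.
lia.
Qed.

(** * Cantor normal forms below [omega^omega] *)

Fixpoint trim0 (s : seq nat) : seq nat :=
  match s with
  | [::] => [::]
  | a :: s' => let t := trim0 s' in if (t == [::]) && (a == 0%N) then [::] else a :: t
  end.

Lemma nth_trim0 s r : nth 0 (trim0 s) r = nth 0 s r.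
Proof.
elim: s r => [|a s IH] r /=; first by [].
case: ifP => [/andP[/eqP E /eqP ->]|_].
  case: r => [|r] //=; by rewrite -IH E nth_nil.
by case: r.
Qed.

Lemma sumn_trim0 s : sumn (trim0 s) = sumn s.
Proof.
elim: s => [|a s IH] //=; case: ifP => [/andP[/eqP E /eqP ->]|_] /=; last by rewrite IH.
by rewrite -IH E.
Qed.

Lemma trim0_normal s : cnf_normal (trim0 s).
Proof.
rewrite /cnf_normal; elim: s => [|a s IH] //=.
case: ifP => [_|] //= Hc.
case E: (trim0 s) => [|b t] /=.
  by rewrite E eqxx /= in Hc; rewrite Hc.
by rewrite E /= in IH.
Qed.

Lemma cnf_normal_last s : cnf_normal s -> s != [::] -> nth 0 s (size s).-1 != 0%N.
Proof.
rewrite /cnf_normal; case: s => [|a s] //= H _.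
by rewrite (last_nth 0) in H.
Qed.

Lemma cnf_size_leP s e : cnf_normal s -> (size s <= e)%N <-> (forall r, (e <= r)%N -> nth 0 s r = 0%N).
Proof.
move=> Hs; split.
  move=> H r Hr; apply: nth_default; lia.
move=> H; case: (leqP (size s) e) => // Hlt.
have Hs0 : s != [::] by case: s Hs H Hlt.
have := cnf_normal_last Hs Hs0; rewrite H //; lia.
Qed.

(* The exponent of the last term of [s], i.e. the limit degree of the ordinal [s]. *)
Definition lowexp (s : seq nat) : nat := find (fun a => a != 0%N) s.

Lemma cnf_has_neq0 s : cnf_normal s -> s != [::] -> has (fun a => a != 0%N) s.
Proof.
move=> Hs H0; apply/(has_nthP 0); exists (size s).-1.
  by case: s H0 {Hs} => //= a s _; lia.
exact: cnf_normal_last.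
Qed.

Lemma lowexp_lt_size s : cnf_normal s -> s != [::] -> (lowexp s < size s)%N.
Proof. move=> Hs H0; rewrite /lowexp -has_find; exact: cnf_has_neq0. Qed.

Lemma nth_lowexp_neq0 s : cnf_normal s -> s != [::] -> nth 0 s (lowexp s) != 0%N.
Proof. move=> Hs H0; exact: (nth_find 0 (cnf_has_neq0 Hs H0)). Qed.

Lemma nth_lt_lowexp s r : (r < lowexp s)%N -> nth 0 s r = 0%N.
Proof. move=> H; have := before_find 0 H; by case: (nth 0 s r). Qed.

Definition revlex_lt (s t : seq nat) : Prop :=
  exists q, (nth 0 s q < nth 0 t q)%N /\ forall r, (q < r)%N -> nth 0 s r = nth 0 t r.

Lemma lexltE s t : size s = size t -> lexlt s t <->
  exists q, [/\ (q < size s)%N, (nth 0 s q < nth 0 t q)%N &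
                forall r, (r < q)%N -> nth 0 s r = nth 0 t r].
Proof.
elim: s t => [|a s IH] [|b t] //=; first by split=> // -[q []].
move=> [] /IH {}IH; split.
  case/orP=> [H|/andP[/eqP E /IH [q [H1 H2 H3]]]].
    by exists 0%N; split=> //.
  exists q.+1; split=> // -[|r] //= Hr; exact: H3.
move=> [[|q] [H1 H2 H3]] /=; first by rewrite H2.
apply/orP; right; apply/andP; split; first by have := H3 0%N erefl => /= ->.
apply/IH; exists q; split=> // r Hr; exact: (H3 r.+1).
Qed.

Lemma cnf_lt_revlex s t : cnf_normal s -> cnf_normal t -> cnf_lt s t <-> revlex_lt s t.
Proof.
move=> Hs Ht; rewrite /cnf_lt; split.
  case/orP=> [Hlt|/andP[/eqP Hsz /lexltE]].
    have Ht0 : t != [::] by case: t Ht Hlt.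
    exists (size t).-1; split.
      rewrite nth_default; last lia.
      by have := cnf_normal_last Ht Ht0; case: (nth 0 t _).
    move=> r Hr; rewrite !nth_default //; lia.
  rewrite !size_rev Hsz => /(_ erefl) [q [H1 H2 H3]].
  exists (size t - q.+1)%N; split.
    by rewrite !nth_rev ?Hsz in H2.
  move=> r Hr; case: (leqP (size t) r) => Hr2.
    rewrite !nth_default //; lia.
  have Hq : (size t - r.+1 < q)%N by lia.
  have := H3 _ Hq; rewrite !nth_rev ?Hsz; try lia.
  by have -> : (size t - (size t - r.+1).+1 = r)%N by lia.
move=> [q [H1 H2]].
case: (ltngtP (size s) (size t)) => Hc //=.
- have Hs0 : s != [::] by case: s Hs H1 H2 Hc.
  have := cnf_normal_last Hs Hs0.
  case: (ltnP q (size s).-1) => Hq.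
    rewrite H2 //; rewrite nth_default //; lia.
  move: H1; rewrite (nth_default 0 (_ : size t <= q)%N) //; lia.
- have Hq : (q < size s)%N.
    case: (ltnP q (size s)) => // Hq; move: H1; rewrite (nth_default 0 (_ : size t <= q)%N) //; lia.
  apply/lexltE; first by rewrite !size_rev.
  exists (size s - q.+1)%N; rewrite size_rev; split; first lia.
    rewrite !nth_rev ?Hc; try lia.
    by have -> : (size t - (size t - q.+1).+1 = q)%N by lia.
  move=> r Hr; rewrite !nth_rev ?Hc; try lia.
  apply: H2; lia.
Qed.

Lemma lexlt_total s t : size s = size t -> s = t \/ lexlt s t \/ lexlt t s.
Proof.
elim: s t => [|a s IH] [|b t] //= Hs; first by left.
move: Hs => [] /IH [->|[H|H]] /=.
- case: (ltngtP a b) => Hab.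
  + by right; left.
  + by right; right.
  + by left; rewrite Hab.
- case: (ltngtP a b) => Hab.
  + by right; left.
  + by right; right.
  + by right; left; apply/orP; right; rewrite ?Hab ?eqxx H.
- case: (ltngtP a b) => Hab.
  + by right; left.
  + by right; right.
  + by right; right; apply/orP; right; rewrite ?Hab ?eqxx H.
Qed.

Lemma cnf_lt_total s t : s = t \/ cnf_lt s t \/ cnf_lt t s.
Proof.
rewrite /cnf_lt; case: (ltngtP (size s) (size t)) => Hc /=; auto.
have : size (rev s) = size (rev t) by rewrite !size_rev.
move/lexlt_total => [E|[H|H]]; auto.
by left; rewrite -(revK s) E revK.
Qed.

Lemma cnf_lt_nil x : cnf_lt x [::] = false.
Proof. by case: x => //= a x; rewrite /cnf_lt /= ltn0 /=; case: (rev _). Qed.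

Lemma cnf_lt_nil_neq x : cnf_lt [::] x -> x != [::].
Proof. by case: x. Qed.

(* Lowering the last coefficient gives the greatest ordinal below [x] of limit
   degree at least [lowexp x]. *)
Definition declow (x : seq nat) : seq nat :=
  trim0 (set_nth 0 x (lowexp x) (nth 0 x (lowexp x)).-1).

Lemma nth_declow x r : nth 0 (declow x) r = if r == lowexp x then (nth 0 x r).-1 else nth 0 x r.
Proof. rewrite /declow nth_trim0 nth_set_nth /=; case: eqP => // ->; done. Qed.

Lemma declow_normal x : cnf_normal (declow x).
Proof. exact: trim0_normal. Qed.

Lemma lowexp_le s r : cnf_normal s -> nth 0 s r != 0%N -> s != [::] /\ (lowexp s <= r)%N.
Proof.
move=> Hs Hr; split; first by case: s Hs Hr => //; rewrite nth_nil.
case: (leqP (lowexp s) r) => // H; by rewrite nth_lt_lowexp in Hr.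
Qed.

Lemma lowexp_ge s r : cnf_normal s -> s != [::] ->
  (forall r', (r' < r)%N -> nth 0 s r' = 0%N) -> (r <= lowexp s)%N.
Proof.
move=> Hs H0 H; case: (leqP r (lowexp s)) => // Hlt.
by have := nth_lowexp_neq0 Hs H0; rewrite H.
Qed.

Lemma revlex_declow x : cnf_normal x -> x != [::] -> revlex_lt (declow x) x.
Proof.
move=> Hx H0; exists (lowexp x); rewrite nth_declow eqxx; split.
  by have := nth_lowexp_neq0 Hx H0; case: (nth 0 x _).
move=> r0 Hr; rewrite nth_declow; case: eqP => [E|//]; lia.
Qed.

Lemma cnf_lt_declow x : cnf_normal x -> x != [::] -> cnf_lt (declow x) x.
Proof. by move=> Hx H0; apply/cnf_lt_revlex; [exact: declow_normal | | exact: revlex_declow]. Qed.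

Lemma declow_size x e : cnf_normal x -> x != [::] -> (size x <= e)%N -> (size (declow x) <= e)%N.
Proof.
move=> Hx H0 He; apply/cnf_size_leP; first exact: declow_normal.
move=> r Hr; rewrite nth_declow; have := lowexp_lt_size Hx H0.
case: eqP => [E|_] Hl; first lia.
exact: (proj1 (cnf_size_leP _ Hx) He).
Qed.

Lemma lowexp_declow x : cnf_normal x -> x != [::] -> declow x != [::] -> (lowexp x <= lowexp (declow x))%N.
Proof.
move=> Hx H0 H1; apply: lowexp_ge => //; first exact: declow_normal.
move=> r Hr; rewrite nth_declow; case: eqP => [E|_]; first lia.
exact: nth_lt_lowexp.
Qed.

Lemma revlex_between_declow x x' : cnf_normal x -> x != [::] -> revlex_lt (declow x) x' -> revlex_lt x' x ->
  exists2 r, (r < lowexp x)%N & nth 0 x' r != 0%N.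
Proof.
move=> Hx H0 [q2 [A2 B2]] [q1 [A1 B1]].
have Hm := nth_lowexp_neq0 Hx H0.
case: (ltnP q2 (lowexp x)) => Hq2.
  exists q2 => //; move: A2; rewrite nth_declow; case: eqP => _; first lia.
  rewrite nth_lt_lowexp //; lia.
exfalso.
case: (ltngtP q1 q2) => Hq.
- have E := B1 _ Hq; move: A2; rewrite nth_declow E.
  case: eqP => [Eq|Ne]; last lia.
  have : (q1 < lowexp x)%N by lia.
  move/nth_lt_lowexp => Z; move: A1; rewrite Z; lia.
- have E := B2 _ Hq; move: E; rewrite nth_declow; case: eqP => [Eq|_]; first lia.
  lia.
- subst q2; move: A2; rewrite nth_declow; case: eqP => [Eq|Ne]; last lia. move: A1; rewrite Eq; lia.
Qed.

Lemma lowexp_between_declow x x' : cnf_normal x -> x != [::] -> cnf_normal x' ->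
  cnf_lt (declow x) x' -> cnf_lt x' x -> x' != [::] /\ (lowexp x' < lowexp x)%N.
Proof.
move=> Hn H0 Hn' /(cnf_lt_revlex (declow_normal x) Hn') lo /(cnf_lt_revlex Hn' Hn) hi.
have [r Hr Hnz] := revlex_between_declow Hn H0 lo hi.
have [x'0 Hle] := lowexp_le Hn' Hnz.
by split=> //; apply: leq_ltn_trans Hr.
Qed.

Lemma nth_le_sumn s r : (nth 0 s r <= sumn s)%N.
Proof. elim: s r => [|a s IH] [|r] //=; [lia | have := IH r; lia]. Qed.

Lemma sumn_declow x : cnf_normal x -> x != [::] -> (sumn (declow x) < sumn x)%N.
Proof.
move=> Hn H0; rewrite /declow sumn_trim0 sumn_set_nth_ltn; last exact: lowexp_lt_size.
have := nth_lowexp_neq0 Hn H0; have := nth_le_sumn x (lowexp x); lia.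
Qed.

(* [declow x + N omega^(lowexp x - 1)] *)
Definition raise (x : seq nat) (N : nat) : seq nat := trim0 (set_nth 0 (declow x) (lowexp x).-1 N).

Lemma nth_raise x N r : nth 0 (raise x N) r = if r == (lowexp x).-1 then N else nth 0 (declow x) r.
Proof. by rewrite /raise nth_trim0 nth_set_nth. Qed.

Lemma raise_spec x N e : cnf_normal x -> x != [::] -> (0 < lowexp x)%N -> (0 < N)%N ->
  (size x <= e)%N ->
  [/\ cnf_normal (raise x N), raise x N != [::], (lowexp x <= (lowexp (raise x N)).+1)%N,
      (size (raise x N) <= e)%N & cnf_lt (raise x N) x].
Proof.
move=> Hn H0 Hm HN He.
have Hl := lowexp_lt_size Hn H0.
have Nb : cnf_normal (raise x N) by exact: trim0_normal.
have Hnz : nth 0 (raise x N) (lowexp x).-1 != 0%N by rewrite nth_raise eqxx; lia.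
have [Hb0 _] := lowexp_le Nb Hnz.
split=> //.
- suff : ((lowexp x).-1 <= lowexp (raise x N))%N by lia.
  apply: lowexp_ge => // r Hr; rewrite nth_raise nth_declow.
  case: eqP => [E|_]; first lia.
  case: eqP => [E|_]; first lia.
  apply: nth_lt_lowexp; lia.
- apply/cnf_size_leP => // r Hr; rewrite nth_raise nth_declow.
  case: eqP => [E|_]; first lia.
  case: eqP => [E|_]; first lia.
  exact: (proj1 (cnf_size_leP _ Hn) He).
- apply/cnf_lt_revlex => //; exists (lowexp x); split.
    rewrite nth_raise nth_declow eqxx; case: eqP => [E|_]; first lia.
    have := nth_lowexp_neq0 Hn H0; lia.
  move=> r Hr; rewrite nth_raise nth_declow; case: eqP => [E|_]; first lia.
  case: eqP => [E|_] //; lia.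
Qed.

Lemma raise_above x y' : cnf_normal x -> x != [::] -> (0 < lowexp x)%N -> cnf_normal y' ->
  cnf_lt y' x -> cnf_lt y' (raise x (nth 0 y' (lowexp x).-1).+1).
Proof.
move=> Hn H0 Hm Hy /(cnf_lt_revlex Hy Hn) [q1 [A1 B1]].
apply/cnf_lt_revlex => //; first exact: trim0_normal.
set N := (nth 0 y' (lowexp x).-1).+1.
have Hq1 : (lowexp x <= q1)%N.
  case: (leqP (lowexp x) q1) => // H; move: A1; rewrite (nth_lt_lowexp H); lia.
case: (ltngtP (lowexp x) q1) => C.
- exists q1; split.
    rewrite nth_raise nth_declow; case: eqP => [E|_]; first lia.
    case: eqP => [E|_] //; lia.
  move=> r Hr; rewrite nth_raise nth_declow B1 //; case: eqP => [E|_]; first lia.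
  case: eqP => [E|_] //; lia.
- lia.
- subst q1.
  case: (ltnP (nth 0 y' (lowexp x)) (nth 0 x (lowexp x)).-1) => C2.
    exists (lowexp x); split.
      rewrite nth_raise nth_declow eqxx; case: eqP => [E|_] //; lia.
    move=> r Hr; rewrite nth_raise nth_declow B1 //; case: eqP => [E|_]; first lia.
    case: eqP => [E|_] //; lia.
  exists (lowexp x).-1; split.
    by rewrite nth_raise eqxx /N.
  move=> r Hr; rewrite nth_raise nth_declow; case: eqP => [E|_]; first lia.
  case: (ltngtP r (lowexp x)) => C3; first lia.
  - by rewrite B1.
  - rewrite C3; lia.
Qed.

(* [N omega^(E - 1)] *)
Definition monomial (E N : nat) : seq nat := trim0 (set_nth 0 [::] E.-1 N).

Lemma nth_monomial E N r : nth 0 (monomial E N) r = if r == E.-1 then N else 0%N.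
Proof. by rewrite /monomial nth_trim0 nth_set_nth /= nth_nil. Qed.

Lemma monomial_spec E N : (0 < E)%N -> (0 < N)%N ->
  [/\ cnf_normal (monomial E N), monomial E N != [::], (E <= (lowexp (monomial E N)).+1)%N &
      (size (monomial E N) <= E)%N].
Proof.
move=> HE HN.
have Ns : cnf_normal (monomial E N) by exact: trim0_normal.
have Hnz : nth 0 (monomial E N) E.-1 != 0%N by rewrite nth_monomial eqxx; lia.
have [H0 _] := lowexp_le Ns Hnz.
split=> //.
- suff : (E.-1 <= lowexp (monomial E N))%N by lia.
  apply: lowexp_ge => // r Hr; rewrite nth_monomial; case: eqP => //; lia.
- apply/cnf_size_leP => // r Hr; rewrite nth_monomial; case: eqP => //; lia.
Qed.

Lemma monomial_above E y' : (0 < E)%N -> cnf_normal y' -> (size y' <= E)%N ->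
  cnf_lt y' (monomial E (nth 0 y' E.-1).+1).
Proof.
move=> HE Hy Hs; apply/cnf_lt_revlex => //; first exact: trim0_normal.
exists E.-1; split; first by rewrite nth_monomial eqxx.
move=> r Hr; rewrite nth_monomial; case: eqP => [E'|_]; first lia.
apply: (proj1 (cnf_size_leP _ Hy) Hs); lia.
Qed.

(** * Limit degrees in [L_i] *)

(* At the start of a copy of [omega^(Lexp i k)] the degree is that exponent,
   except for the first copy of a summand, which is preceded by the next
   summand on the left. *)
Definition ldeg (i : int) (p : Lelt) : nat :=
  match p with
  | LSum k j x => if x == [::] then (if j == 0%N then Lexp i k.+1 else Lexp i k) else lowexp x
  | LTop x => if x == [::] then Lexp i 1 else lowexp x
  end.

(* The greatest point below [p] of degree at least [ldeg i p]; for [LTop x]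
   with [x = omega^m], [m > Lexp i 1], it is the start of summand
   [m - Lexp i 1], whose left neighbour is the summand of exponent [m]. *)
Definition lprev (i : int) (p : Lelt) : Lelt :=
  match p with
  | LSum k j x => if x == [::] then
                    (if j == 0%N then LSum k.+1 (Lcoef i k.+1).-1 [::] else LSum k j.-1 [::])
                  else LSum k j (declow x)
  | LTop x => if x == [::] then LSum 1 (Lcoef i 1).-1 [::]
              else if (declow x == [::]) && (Lexp i 1 < lowexp x)%N then LSum (lowexp x - Lexp i 1) 0 [::]
              else LTop (declow x)
  end.

Lemma LexpS i k : Lexp i k.+1 = (Lexp i k).+1.
Proof. by rewrite /Lexp addSn. Qed.

Lemma Lexp_ge i k : (k <= Lexp i k)%N.
Proof. rewrite /Lexp; lia. Qed.

Lemma Lcoef_gt0 i k : (0 < k)%N -> (0 < Lcoef i k)%N.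
Proof. rewrite /Lcoef; lia. Qed.

Lemma Lexp_mono i k k' : (k <= k')%N -> (Lexp i k <= Lexp i k')%N.
Proof. rewrite /Lexp; lia. Qed.

Lemma Lcoef_Lexp i k : ((Lcoef i k)%:Z = (Lexp i k)%:Z - i)%R.
Proof. rewrite /Lcoef /Lexp; case: i => n /=; lia. Qed.

Lemma ldeg_LSum_leS i k j x : Lvalid i (LSum k j x) -> (ldeg i (LSum k j x) <= Lexp i k.+1)%N.
Proof.
move=> /and4P [_ _ Hn Hs] /=; rewrite LexpS.
case: eqP => [_|/eqP H0]; first by case: eqP => _; lia.
have := lowexp_lt_size Hn H0; lia.
Qed.

Lemma ldeg_LSum_le i k j x : Lvalid i (LSum k j x) -> (j != 0%N) || (x != [::]) ->
  (ldeg i (LSum k j x) <= Lexp i k)%N.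
Proof.
move=> /and4P [_ _ Hn Hs] Hjx /=.
case: (x =P [::]) => [E|/eqP H0] /=.
  by move: Hjx; rewrite E /= orbF; case: eqP.
have := lowexp_lt_size Hn H0; lia.
Qed.

Lemma ldeg_LSum_lt i k j x : Lvalid i (LSum k j x) -> x != [::] ->
  (ldeg i (LSum k j x) < Lexp i k)%N.
Proof.
move=> /and4P [_ _ Hn Hs] /= H0; rewrite (negbTE H0).
have := lowexp_lt_size Hn H0; lia.
Qed.

Lemma Lvalid_LSum i k j x : (0 < k)%N -> (j < Lcoef i k)%N -> cnf_normal x -> (size x <= Lexp i k)%N ->
  Lvalid i (LSum k j x).
Proof. by move=> *; apply/and4P. Qed.

Lemma lprev_spec i p : Lvalid i p ->
  [/\ Lvalid i (lprev i p), Llt (lprev i p) p & (ldeg i p <= ldeg i (lprev i p))%N].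
Proof.
case: p => [x|k j x] /=.
- move=> Hn; case: eqP => [->|/eqP H0].
    split.
    + apply/and4P; split=> //; have := Lcoef_gt0 i (isT : (0 < 1)%N); lia.
    + by [].
    + rewrite /=; case: eqP => _; rewrite ?LexpS //; lia.
  case: andP => [[/eqP D L]|ND].
    split.
    + apply/and4P; split=> //; [lia | apply: Lcoef_gt0; lia].
    + by [].
    + rewrite /= /Lexp in L *; lia.
  split=> //=.
  + exact: declow_normal.
  + exact: cnf_lt_declow.
  + case: eqP => [D|/eqP D]; last exact: lowexp_declow.
    case: (leqP (lowexp x) (Lexp i 1)) => // L; exfalso; apply: ND; split=> //; exact/eqP.
- move=> /and4P [Hk Hj Hn Hs]; case: eqP => [->|/eqP H0].
    case: eqP => [->|/eqP Hj0].
      split.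
      + apply: Lvalid_LSum => //; have := Lcoef_gt0 i (ltn0Sn k); lia.
      + by rewrite /= ltnSn.
      + rewrite /=; case: eqP => _; rewrite ?LexpS //; lia.
    split.
    + apply: Lvalid_LSum => //; lia.
    + rewrite /= ltnn eqxx /=; lia.
    + rewrite /=; case: eqP => _; rewrite ?LexpS //; lia.
  split.
  + apply: Lvalid_LSum => //; [exact: declow_normal | exact: declow_size].
  + by rewrite /= ltnn !eqxx ltnn /= cnf_lt_declow.
  + rewrite /=; case: eqP => [D|/eqP D]; last exact: lowexp_declow.
    have := lowexp_lt_size Hn H0; case: eqP => _; rewrite ?LexpS; lia.
Qed.

Lemma lprev_LSum i k j x : lprev i (LSum k j x) =
  if x == [::] then (if j == 0%N then LSum k.+1 (Lcoef i k.+1).-1 [::] else LSum k j.-1 [::])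
  else LSum k j (declow x).
Proof. by []. Qed.

Lemma LltSP k j x k' j' x' : Llt (LSum k j x) (LSum k' j' x') <->
  (k' < k)%N \/ (k = k' /\ ((j < j')%N \/ (j = j' /\ cnf_lt x x'))).
Proof.
rewrite /=; split.
  case/orP => [H|/andP[/eqP -> /orP[H|/andP[/eqP -> H]]]]; auto.
case=> [H|[E [H|[E2 H]]]]; first by rewrite H.
- by rewrite E eqxx H orbT.
- by rewrite E E2 !eqxx H !orbT.
Qed.

Lemma declow_nil_nth x r : declow x = [::] -> r != lowexp x -> nth 0 x r = 0%N.
Proof. move=> D Hr; have := nth_declow x r; rewrite D nth_nil (negbTE Hr); by move/esym. Qed.

Lemma ldeg_between_power i x q : cnf_normal x -> x != [::] -> declow x = [::] ->
  (Lexp i 1 < lowexp x)%N -> Lvalid i q ->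
  Llt (LSum (lowexp x - Lexp i 1) 0 [::]) q -> Llt q (LTop x) -> (ldeg i q < lowexp x)%N.
Proof.
move=> Hn H0 D L; case: q => [x'|k' j' x'] Vq /=.
  move=> _ Hlt; have Hn' : cnf_normal x' by [].
  case/(cnf_lt_revlex Hn' Hn): Hlt => q1 [A1 B1].
  have Hq1 : q1 = lowexp x.
    case: (q1 =P lowexp x) => // /eqP Ne; by move: A1; rewrite (declow_nil_nth D Ne) ltn0.
  subst q1.
  case: eqP => [_|/eqP H0']; first exact: L.
  have Hl := nth_lowexp_neq0 Hn' H0'.
  have x1 : nth 0 x (lowexp x) = 1%N.
    have := nth_declow x (lowexp x); rewrite D nth_nil eqxx.
    have := nth_lowexp_neq0 Hn H0; lia.
  case: (ltngtP (lowexp x') (lowexp x)) => C //; exfalso.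
  - by move: Hl; rewrite B1 // declow_nil_nth //; lia.
  - by move: Hl; rewrite C; lia.
move=> H _; change (ldeg i (LSum k' j' x') < lowexp x)%N.
have H1 := ldeg_LSum_leS Vq; have H2 := ldeg_LSum_le Vq.
move: (ldeg i (LSum k' j' x')) H1 H2 => d H1 H2.
have EK : Lexp i (lowexp x - Lexp i 1).+1 = lowexp x by rewrite /Lexp in L *; lia.
rewrite -EK LexpS.
case/orP: H => [Hk|/andP[/eqP Hk Hj]].
  have := Lexp_mono i Hk; lia.
rewrite Hk.
have : (j' != 0%N) || (x' != [::]).
  case/orP: Hj => [Hj|/andP[_ Hx]]; first by rewrite -lt0n Hj.
  by rewrite (cnf_lt_nil_neq Hx) orbT.
move/H2; lia.
Qed.

Lemma ldeg_between_LTop i x q : Lvalid i (LTop x) -> Lvalid i q ->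
  Llt (lprev i (LTop x)) q -> Llt q (LTop x) -> (ldeg i q < ldeg i (LTop x))%N.
Proof.
move=> /= Hn Vq; case: (x =P [::]) => [->|/eqP H0] /=.
  case: q Vq => [x'|k' j' x'] Vq /=; first by rewrite cnf_lt_nil.
  move=> H _; have Hj' : (j' < Lcoef i k')%N by case/and4P: Vq.
  move: H; case: (ltngtP 1 k') => Hk //=; first by case/and4P: Vq; lia.
  subst k'; case: (ltngtP (Lcoef i 1).-1 j') => Hj //=; first lia.
  by move/cnf_lt_nil_neq; apply: ldeg_LSum_lt.
case: andP => [[/eqP D L]|_]; first exact: ldeg_between_power.
case: q Vq => [x'|k' j' x'] Vq //= Hlt Hlt2.
have [x'0 lt_low] := lowexp_between_declow Hn H0 Vq Hlt Hlt2.
by rewrite (negbTE x'0).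
Qed.

Lemma ldeg_between_LSum i k j x q : Lvalid i (LSum k j x) -> Lvalid i q ->
  Llt (lprev i (LSum k j x)) q -> Llt q (LSum k j x) -> (ldeg i q < ldeg i (LSum k j x))%N.
Proof.
case/and4P=> Hk Hj Hn Hs; case: q => [x'|k' j' x'] Vq; first by move=> _ /=.
have Hn' : cnf_normal x' by case/and4P: Vq.
have Hj' : (j' < Lcoef i k')%N by case/and4P: Vq.
rewrite lprev_LSum; case: (x =P [::]) => [Ex|/eqP H0].
  subst x; case: (j =P 0%N) => [Ej|/eqP Hj0].
    subst j => /LltSP H1 /LltSP H2.
    have -> : ldeg i (LSum k 0 [::]) = Lexp i k.+1 by [].
    case: H2 => [Hk2|[_ [Hj2|[_ Hc]]]]; [|lia|by rewrite cnf_lt_nil in Hc].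
    case: H1 => [Hk1|[Ek [Hj1|[Ej1 Hc]]]]; [lia|subst k'; lia|].
    subst k'; exact: (ldeg_LSum_lt Vq (cnf_lt_nil_neq Hc)).
  move=> /LltSP H1 /LltSP H2.
  have -> : ldeg i (LSum k j [::]) = Lexp i k by rewrite /= (negbTE Hj0).
  case: H2 => [Hk2|[Ek2 [Hj2|[_ Hc]]]]; [|subst k'|by rewrite cnf_lt_nil in Hc].
    case: H1 => [Hk1|[Ek _]]; lia.
  case: H1 => [Hk1|[_ [Hj1|[Ej1 Hc]]]]; [lia|lia|].
  exact: (ldeg_LSum_lt Vq (cnf_lt_nil_neq Hc)).
move=> /LltSP H1 /LltSP H2.
case: H2 => [Hk2|[Ek2 [Hj2|[Ej2 Hlt2]]]].
- case: H1 => [Hk1|[Ek _]]; lia.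
- case: H1 => [Hk1|[_ [Hj1|[Ej1 _]]]]; lia.
subst k' j'; case: H1 => [Hk1|[_ [Hj1|[_ Hlt]]]]; [lia|lia|].
have [x'0 lt_low] := lowexp_between_declow Hn H0 Hn' Hlt Hlt2.
by rewrite /= (negbTE x'0) (negbTE H0).
Qed.

Lemma ldeg_between i p q : Lvalid i p -> Lvalid i q -> Llt (lprev i p) q -> Llt q p ->
  (ldeg i q < ldeg i p)%N.
Proof. by case: p => [x|k j x]; [apply: ldeg_between_LTop | apply: ldeg_between_LSum]. Qed.

Definition coefs (p : Lelt) : seq nat := match p with LSum _ _ x => x | LTop x => x end.

(* A point of degree [Lexp i k - 1] near the end of the copy [(k, j)] of
   [omega^(Lexp i k)], chosen above the ordinal part of [y]. *)
Definition copy_top (i : int) (k j : nat) (y : Lelt) : Lelt :=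
  LSum k j (monomial (Lexp i k) (nth 0 (coefs y) (Lexp i k).-1).+1).

Lemma copy_top_spec i k j y : (0 < k)%N -> (j < Lcoef i k)%N ->
  Lvalid i (copy_top i k j y) /\ (Lexp i k <= (ldeg i (copy_top i k j y)).+1)%N.
Proof.
move=> Hk Hj; have HE : (0 < Lexp i k)%N by have := Lexp_ge i k; lia.
have [Nn N0 Nl Nsz] := monomial_spec HE (ltn0Sn (nth 0 (coefs y) (Lexp i k).-1)).
by split; [apply: Lvalid_LSum | rewrite /= (negbTE N0)].
Qed.

Lemma Llt_copy_top i k j k' j' y' : Lvalid i (LSum k' j' y') ->
  (k < k')%N \/ (k = k' /\ (j' <= j)%N) -> Llt (LSum k' j' y') (copy_top i k j (LSum k' j' y')).
Proof.
case/and4P=> Hk' _ Hy' Hsy' Hpos; apply/LltSP.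
case: Hpos => [|[Ek Hj']]; first by left.
subst k'; right; split=> //; case: (ltngtP j' j) => Cj; [by left | lia | right].
split=> //; apply: monomial_above => //; have := Lexp_ge i k; lia.
Qed.

Lemma Llt_last_copy_top i k k' j' y' : Lvalid i (LSum k' j' y') -> (k <= k')%N ->
  Llt (LSum k' j' y') (copy_top i k (Lcoef i k).-1 (LSum k' j' y')).
Proof.
move=> Vy Hkk; apply: Llt_copy_top => //; case: (ltngtP k k') => C; [by left | lia | right].
by subst k'; split=> //; case/and4P: Vy => _ Hj' _ _; rewrite -ltnS prednK // (leq_trans _ Hj').
Qed.

Lemma ldeg_near_LTop i x y : Lvalid i (LTop x) -> Lvalid i y -> Llt y (LTop x) ->
  (0 < ldeg i (LTop x))%N ->
  exists z, [/\ Lvalid i z, Llt y z, Llt z (LTop x) & (ldeg i (LTop x) <= (ldeg i z).+1)%N].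
Proof.
move=> Hn Vy Hyp; case: (x =P [::]) => [Ex|/eqP H0] Hdg.
  subst x; case: y Vy Hyp => [y'|k' j' y'] Vy Hyp; first by move: Hyp; rewrite /= cnf_lt_nil.
  have Hc : ((Lcoef i 1).-1 < Lcoef i 1)%N by rewrite ltn_predL; apply: Lcoef_gt0.
  have [Vz Dz] := copy_top_spec (LSum k' j' y') (isT : (0 < 1)%N) Hc.
  exists (copy_top i 1 (Lcoef i 1).-1 (LSum k' j' y')); split=> //.
  by apply: Llt_last_copy_top => //; case/and4P: Vy.
have Hm : (0 < lowexp x)%N by move: Hdg; rewrite /= (negbTE H0).
pose N := (nth 0 (coefs y) (lowexp x).-1).+1.
have [Nb Nb0 Nl _ Nlt] := @raise_spec x N (size x) Hn H0 Hm (ltn0Sn _) (leqnn (size x)).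
exists (LTop (raise x N)); split=> //.
- case: y Vy Hyp @N Nb Nb0 Nl Nlt => [y'|k' j' y'] Vy Hyp N Nb Nb0 Nl Nlt //.
  exact: raise_above.
- by rewrite /= (negbTE Nb0) (negbTE H0).
Qed.

Lemma ldeg_near_LSum i k j x y : Lvalid i (LSum k j x) -> Lvalid i y ->
  Llt y (LSum k j x) -> (0 < ldeg i (LSum k j x))%N ->
  exists z, [/\ Lvalid i z, Llt y z, Llt z (LSum k j x) &
                (ldeg i (LSum k j x) <= (ldeg i z).+1)%N].
Proof.
move=> Vp Vy Hyp Hdg; case/and4P: (Vp) => Hk Hj Hn Hs.
case: y Vy Hyp => [y'|k' j' y'] Vy Hyp //.
move/LltSP: Hyp => Hyp; case: (x =P [::]) => [Ex|/eqP H0].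
  subst x; case: (j =P 0%N) => [Ej|/eqP Hj0].
    subst j; have Hc : ((Lcoef i k.+1).-1 < Lcoef i k.+1)%N.
      by rewrite ltn_predL; apply: Lcoef_gt0.
    have [Vz Dz] := copy_top_spec (LSum k' j' y') (ltn0Sn k) Hc.
    exists (copy_top i k.+1 (Lcoef i k.+1).-1 (LSum k' j' y')); split=> //.
    + apply: Llt_last_copy_top => //.
      by case: Hyp => [|[_ [|[_ Hc']]]]; [lia | lia | rewrite cnf_lt_nil in Hc'].
    + by apply/LltSP; left.
  have [Vz Dz] := copy_top_spec (LSum k' j' y') Hk (leq_ltn_trans (leq_pred j) Hj).
  exists (copy_top i k j.-1 (LSum k' j' y')); split=> //.
  + apply: Llt_copy_top => //.
    by case: Hyp => [|[<- [|[_ Hc']]]]; [lia | lia | rewrite cnf_lt_nil in Hc'].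
  + by apply/LltSP; right; split=> //; left; lia.
  + by move: Dz; rewrite /= (negbTE Hj0).
have Hm : (0 < lowexp x)%N by move: Hdg; rewrite /= (negbTE H0).
pose N := (nth 0 y' (lowexp x).-1).+1.
have [Nb Nb0 Nl Nsz Nlt] := @raise_spec x N (Lexp i k) Hn H0 Hm (ltn0Sn _) Hs.
exists (LSum k j (raise x N)); split.
- exact: Lvalid_LSum.
- apply/LltSP; case: Hyp => [Hkk|[Ek [Hjj|[Ej Hc]]]]; [by left|by right; split=> //; left|].
  right; split=> //; right; split=> //; apply: raise_above => //.
  by case/and4P: Vy.
- by apply/LltSP; right; split=> //; right; split.
- by rewrite /= (negbTE Nb0) (negbTE H0).
Qed.

Lemma ldeg_near i p y : Lvalid i p -> Lvalid i y -> Llt y p -> (0 < ldeg i p)%N ->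
  exists z, [/\ Lvalid i z, Llt y z, Llt z p & (ldeg i p <= (ldeg i z).+1)%N].
Proof. by case: p => [x|k j x]; [apply: ldeg_near_LTop | apply: ldeg_near_LSum]. Qed.

Lemma Llt_total p q : p = q \/ Llt p q \/ Llt q p.
Proof.
case: p => [x|k j x]; case: q => [x'|k' j' x']; try by auto.
- case: (cnf_lt_total x x') => [->|[H|H]]; auto.
- case: (ltngtP k k') => Ck.
  + by right; right; apply/LltSP; left.
  + by right; left; apply/LltSP; left.
  + subst k'; case: (ltngtP j j') => Cj.
    * by right; left; apply/LltSP; right; split=> //; left.
    * by right; right; apply/LltSP; right; split=> //; left.
    * subst j'; case: (cnf_lt_total x x') => [->|[H|H]]; first by left.
      - by right; left; apply/LltSP; right; split=> //; right.
      - by right; right; apply/LltSP; right; split=> //; right.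
Qed.


(** * The descending walk in [L_i] *)

Definition lwalk (i : int) (t : nat) : Lelt := iter t (lprev i) (LSum 1 0 [::]).

Fixpoint csum (i : int) (k : nat) : nat :=
  match k with 0 => 0%N | k'.+1 => (csum i k' + Lcoef i k'.+2)%N end.

Lemma lwalk_add i n s : lwalk i (n + s) = iter s (lprev i) (lwalk i n).
Proof. by rewrite /lwalk addnC iterD. Qed.

Lemma lwalk_mid_gen i k : lwalk i (csum i k) = LSum k.+1 0 [::] ->
  forall s, (0 < s <= Lcoef i k.+2)%N -> lwalk i (csum i k + s) = LSum k.+2 (Lcoef i k.+2 - s) [::].
Proof.
move=> H0; elim=> [|s IH] // /andP[_ Hs].
rewrite addnS /lwalk iterS -/(lwalk i _).
case: s IH Hs => [|s] IH Hs.
  by rewrite addn0 H0 /= subn1.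
rewrite IH; last lia.
rewrite /= ifN; last lia.
congr LSum; lia.
Qed.

Lemma lwalk_csum i k : lwalk i (csum i k) = LSum k.+1 0 [::].
Proof.
elim: k => [|k IH] //=.
have Hc : (0 < Lcoef i k.+2)%N by apply: Lcoef_gt0.
rewrite (lwalk_mid_gen IH) ?subnn //; lia.
Qed.

Lemma lwalk_mid i k s : (0 < s <= Lcoef i k.+2)%N -> lwalk i (csum i k + s) = LSum k.+2 (Lcoef i k.+2 - s) [::].
Proof. move=> Hs; exact: (lwalk_mid_gen (lwalk_csum i k) Hs). Qed.

Lemma csum_ltS i k : (csum i k < csum i k.+1)%N.
Proof. rewrite /=; have := Lcoef_gt0 i (ltn0Sn k.+1); lia. Qed.

Lemma csum_mono i k k' : (k <= k')%N -> (csum i k <= csum i k')%N.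
Proof.
move=> H; rewrite -(subnKC H); elim: (k' - k)%N => [|n IH]; first by rewrite addn0.
rewrite addnS; have := csum_ltS i (k + n); lia.
Qed.

Lemma csum_find i t : exists k, (csum i k <= t < csum i k.+1)%N.
Proof.
elim: t => [|t [k /andP[H1 H2]]].
  by exists 0%N; have := csum_ltS i 0.
case: (ltnP t.+1 (csum i k.+1)) => H3.
  by exists k; rewrite H3 andbT; lia.
exists k.+1; have := csum_ltS i k.+1; lia.
Qed.

Lemma csum_uniq i k k' t : (csum i k <= t < csum i k.+1)%N -> (csum i k' <= t < csum i k'.+1)%N -> k = k'.
Proof.
move=> H1 H2; case: (ltngtP k k') => C //.
- have := csum_mono i C; lia.
- have := csum_mono i C; lia.
Qed.

Lemma ldeg_lwalk i t k : (csum i k <= t < csum i k.+1)%N -> ldeg i (lwalk i t) = Lexp i k.+2.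
Proof.
move=> /andP[H1 H2].
have -> : t = (csum i k + (t - csum i k))%N by lia.
case E: (t - csum i k)%N => [|s].
  by rewrite addn0 lwalk_csum.
rewrite lwalk_mid /=; last by move: H2; rewrite /=; lia.
rewrite ifN //; move: H2; rewrite /=; lia.
Qed.

Lemma ldeg_lwalkP i D t : (Lexp i 2 <= D)%N ->
  (D = ldeg i (lwalk i t) <-> (csum i (D - Lexp i 2) <= t < csum i (D - Lexp i 2).+1)%N).
Proof.
move=> HD; have [k Hk] := csum_find i t.
rewrite (ldeg_lwalk Hk); split.
  move=> ->; have -> : (Lexp i k.+2 - Lexp i 2 = k)%N by rewrite /Lexp; lia.
  exact: Hk.
move=> H; have := csum_uniq Hk H; rewrite /Lexp in HD *; lia.
Qed.

Definition lsize (i : int) (p : Lelt) : nat :=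
  match p with LSum _ j x => (j + sumn x)%N | LTop x => (sumn x + Lcoef i 1)%N end.

Definition is_lstart (p : Lelt) : bool :=
  match p with LSum k j x => (j == 0%N) && (x == [::]) | LTop _ => false end.

Lemma Lvalid_iter i p s : Lvalid i p -> Lvalid i (iter s (lprev i) p).
Proof. move=> H; elim: s => [|s IH] //=; by case: (lprev_spec IH). Qed.

Lemma ldeg_iter i p s : Lvalid i p -> (ldeg i p <= ldeg i (iter s (lprev i) p))%N.
Proof.
move=> H; elim: s => [|s IH] //=.
have [_ _ L] := lprev_spec (Lvalid_iter s H); lia.
Qed.

Lemma lsize_lprev i p : Lvalid i p -> ~~ is_lstart p -> is_lstart (lprev i p) \/ (lsize i (lprev i p) < lsize i p)%N.
Proof.
case: p => [x|k j x] /=.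
- move=> Hn _; case: (x =P [::]) => [->|/eqP H0] /=.
    right; rewrite /Lcoef; lia.
  case: ifP => _; first by left; rewrite /= eqxx.
  right; rewrite /lsize; have := sumn_declow Hn H0; lia.
- move=> /and4P[Hk Hj Hn Hs] HP; case: (x =P [::]) => [Ex|/eqP H0] /=.
    subst x; case: (j =P 0%N) => [Ej|/eqP Hj0]; first by subst j.
    right; rewrite /lsize /=; lia.
  right; have := sumn_declow Hn H0; lia.
Qed.

Lemma lprev_reach i p : Lvalid i p -> exists s K, iter s (lprev i) p = LSum K.+1 0 [::].
Proof.
move=> Vp; move Hm: (lsize i p) => n; elim/ltn_ind: n p Hm Vp => n IH p Hm Vp.
case HP: (is_lstart p).
  move: HP Vp; case: p Hm IH => [x|k j x] //= _ _.
  move=> /andP[/eqP -> /eqP ->] /and4P[Hk _ _ _].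
  by exists 0%N, k.-1; rewrite prednK.
have [V1 _ _] := lprev_spec Vp.
case: (lsize_lprev Vp (negbT HP)) => [HP1|Hlt].
  move: HP1 V1; case E: (lprev i p) => [x|k j x] //=.
  move=> /andP[/eqP Ej /eqP Ex] /and4P[Hk _ _ _].
  by exists 1%N, k.-1; rewrite /= E Ej Ex prednK.
have Hlt' : (lsize i (lprev i p) < n)%N by rewrite -Hm.
have [s [K E]] := IH _ Hlt' (lprev i p) erefl V1.
by exists s.+1, K; rewrite iterSr.
Qed.

Lemma lprev_iter_lwalk i p : Lvalid i p ->
  exists s0 K, forall t, iter (t + s0) (lprev i) p = lwalk i (csum i K + t).
Proof.
move=> Vp; have [s0 [K reach]] := lprev_reach Vp; exists s0, K => t.
by rewrite iterD reach lwalk_add lwalk_csum.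
Qed.

Lemma ldeg_lprev_iterP i p : Lvalid i p -> exists s0 K, forall k, (K < k)%N -> forall t,
  Lexp i k.+2 = ldeg i (iter t (lprev i) p) <->
    (csum i k - csum i K + s0 <= t < csum i k.+1 - csum i K + s0)%N.
Proof.
move=> Vp; have [s0 [K walk]] := lprev_iter_lwalk Vp.
exists s0, K => k ltK t.
have leK := csum_mono i (ltnW ltK); have ltk := csum_ltS i k.
case: (ltnP t s0) => Ht.
  have := ldeg_iter (s0 - t) (Lvalid_iter t Vp).
  rewrite -iterD subnK; last exact: ltnW.
  have := walk 0%N; rewrite add0n addn0 lwalk_csum => -> /=.
  rewrite /Lexp; lia.
have Ek : (Lexp i k.+2 - Lexp i 2 = k)%N by rewrite /Lexp; lia.
rewrite -(subnK Ht) walk ldeg_lwalkP; last by rewrite /Lexp; lia.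
rewrite Ek; lia.
Qed.

(** * The sum of the [L_i] over [i] in [P] *)

Section Zsum.
Variable P : int -> bool.
Local Notation car := (Zsum_car P).
Local Notation Z := (Zsum P).

Definition zidx (a : car) : int := (val a).1.
Definition zpt (a : car) : Lelt := (val a).2.

Lemma zidxP (a : car) : P (zidx a).
Proof. by case: a => [[i p] H]; case/andP: (H). Qed.

Lemma zptV (a : car) : Lvalid (zidx a) (zpt a).
Proof. by case: a => [[i p] H]; case/andP: (H). Qed.

Lemma Zsum_ltE (a b : car) : @lo_lt Z a b <->
  ((zidx a < zidx b)%R \/ (zidx a = zidx b /\ Llt (zpt a) (zpt b))).
Proof.
case: a => [[i p] Ha]; case: b => [[i' p'] Hb]; rewrite /zidx /zpt /=.
change (((i < i')%R || ((i == i') && Llt p p')) <-> ((i < i')%R \/ (i = i' /\ Llt p p'))).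
split; first by case/orP => [->|/andP[/eqP -> ->]]; [left|right].
by case=> [->|[-> ->]]; rewrite ?eqxx ?orbT.
Qed.

Lemma Zsum_eq (a b : car) : zidx a = zidx b -> zpt a = zpt b -> a = b.
Proof.
case: a => [[i p] Ha]; case: b => [[i' p'] Hb]; rewrite /zidx /zpt /= => E1 E2.
subst i' p'; congr exist; exact: bool_irrelevance.
Qed.

Definition mkZsum (i : int) (p : Lelt) (Hi : P i) (Hp : Lvalid i p) : car :=
  exist _ (i, p) (introT andP (conj Hi Hp)).

Definition zprev (a : car) : car :=
  @mkZsum (zidx a) (lprev (zidx a) (zpt a)) (zidxP a)
    (let: And3 h _ _ := lprev_spec (zptV a) in h).

Lemma zidx_zprev a : zidx (zprev a) = zidx a. Proof. by []. Qed.
Lemma zpt_zprev a : zpt (zprev a) = lprev (zidx a) (zpt a). Proof. by []. Qed.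

Definition zdeg (a : car) : nat := ldeg (zidx a) (zpt a).

Lemma zprev_lt (a : car) : @lo_lt Z (zprev a) a.
Proof. by apply/Zsum_ltE; right; split=> //; case: (lprev_spec (zptV a)). Qed.

Lemma Zsum_between (a b c : car) : @lo_lt Z a b -> @lo_lt Z b c ->
  zidx a = zidx c -> zidx b = zidx a /\ Llt (zpt a) (zpt b) /\ Llt (zpt b) (zpt c).
Proof.
move=> /Zsum_ltE H1 /Zsum_ltE H2 E.
case: H1 => [L1|[E1 L1]]; case: H2 => [L2|[E2 L2]] //; exfalso.
- by have := lt_trans L1 L2; rewrite E ltxx.
- by move: L1; rewrite E2 E ltxx.
- by move: L2; rewrite -E1 E ltxx.
Qed.

Lemma zdeg_between (a z : car) : @lo_lt Z (zprev a) z -> @lo_lt Z z a -> (zdeg z < zdeg a)%N.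
Proof.
move=> lo hi; have [Eb [L1 L2]] := Zsum_between lo hi (zidx_zprev a).
rewrite zidx_zprev in Eb; rewrite zpt_zprev in L1.
have Vz : Lvalid (zidx a) (zpt z) by rewrite -Eb; apply: zptV.
by rewrite /zdeg Eb; apply: ldeg_between (zptV a) Vz L1 L2.
Qed.

Lemma zdeg_near (a y : car) : @lo_lt Z y a -> (0 < zdeg a)%N ->
  exists z : car, [/\ @lo_lt Z y z, @lo_lt Z z a & (zdeg a <= (zdeg z).+1)%N].
Proof.
move=> /Zsum_ltE Hy Hdg.
have [z [Vz Hyz Hza Hdz]] : exists z, [/\ Lvalid (zidx a) z,
    (zidx y < zidx a)%R \/ Llt (zpt y) z, Llt z (zpt a) & (zdeg a <= (ldeg (zidx a) z).+1)%N].
  case: Hy => [Lb|[Eb Ll]].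
    have [V1 L1 _] := lprev_spec (zptV a).
    have [z [Vz _ Hza Hdz]] := ldeg_near (zptV a) V1 L1 Hdg.
    by exists z; split=> //; left.
  have := zptV y; rewrite Eb => Vy.
  have [z [Vz Hyz Hza Hdz]] := ldeg_near (zptV a) Vy Ll Hdg.
  by exists z; split=> //; right.
exists (mkZsum (zidxP a) Vz); split=> //; apply/Zsum_ltE; last by right.
case: Hy => [Lb|[Eb _]]; first by left.
by case: Hyz => [L|L]; [left | right].
Qed.

Lemma is_lim_Zsum d (a : car) : @is_lim Z d a <-> (d <= zdeg a)%N.
Proof.
elim: d a => [|d IH] a //=; split.
  move=> lim_a; rewrite leqNgt; apply/negP => lt_a.
  have [z [Hz1 [Hz2 /IH Hz3]]] := lim_a _ (zprev_lt a).
  by have := zdeg_between Hz1 Hz2; lia.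
move=> Hd y /zdeg_near [|z [yz za Hdz]]; first lia.
by exists z; split=> //; split=> //; apply/IH; lia.
Qed.

Lemma lim_deg_Zsum (a : car) D : @lim_deg Z a D <-> D = zdeg a.
Proof. by rewrite /lim_deg !is_lim_Zsum; split=> [[]|->]; lia. Qed.

Lemma zprev_step (a : car) : @prev_step Z (zprev a) a.
Proof.
exists (zdeg a); split; first exact/lim_deg_Zsum.
- exact: zprev_lt.
- by apply/is_lim_Zsum; case: (lprev_spec (zptV a)).
- by move=> z Hz1 Hz2 /is_lim_Zsum; have := zdeg_between Hz1 Hz2; lia.
Qed.

Lemma prev_step_zprev (w a : car) : @prev_step Z w a -> w = zprev a.
Proof.
case=> D [/lim_deg_Zsum HD Hwa /is_lim_Zsum Hw Hz].
have Hls : @is_lim Z D (zprev a).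
  by apply/is_lim_Zsum; rewrite HD; case: (lprev_spec (zptV a)).
move/Zsum_ltE: (Hwa) => [Lb|[Eb Ll]].
  by case: (Hz (zprev a)) => //; [apply/Zsum_ltE; left | apply: zprev_lt].
have Vw : Lvalid (zidx a) (zpt w) by rewrite -Eb; exact: zptV.
case: (Llt_total (zpt w) (lprev (zidx a) (zpt a))) => [E|[L|L]].
- exact: Zsum_eq.
- by case: (Hz (zprev a)) => //; [apply/Zsum_ltE; right | apply: zprev_lt].
- have := ldeg_between (zptV a) Vw L Ll; rewrite /zdeg Eb in Hw; rewrite /zdeg in HD; lia.
Qed.

Lemma zidx_iter s (a : car) : zidx (iter s zprev a) = zidx a.
Proof. by elim: s => //= s IH; rewrite zidx_zprev. Qed.

Lemma zpt_iter s (a : car) : zpt (iter s zprev a) = iter s (lprev (zidx a)) (zpt a).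
Proof. by elim: s => //= s IH; rewrite zpt_zprev zidx_iter IH. Qed.

Lemma prev_walk_iter (v : nat -> car) : (forall t, @prev_step Z (v t.+1) (v t)) ->
  forall t, v t = iter t zprev (v 0%N).
Proof. by move=> steps; elim=> [|t IH] //=; rewrite -IH; apply: prev_step_zprev. Qed.

Lemma walk_offset_Zsum j : P j -> walk_offset Z j.
Proof.
move=> Pj; have V1 : Lvalid j (LSum 1 0 [::]) by apply: Lvalid_LSum => //; apply: Lcoef_gt0.
exists (fun t => iter t zprev (mkZsum Pj V1)), (Lexp j 2), (fun D => csum j (D - Lexp j 2)).
split=> [t|D HD]; first exact: zprev_step.
have -> : (D.+1 - Lexp j 2 = (D - Lexp j 2).+1)%N by lia.
split=> [|t]; last by rewrite lim_deg_Zsum /zdeg zidx_iter zpt_iter ldeg_lwalkP.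
rewrite /= PoszD Lcoef_Lexp.
have -> : Lexp j (D - Lexp j 2).+2 = D by rewrite /Lexp in HD *; lia.
lia.
Qed.

Lemma walk_offset_Zsum_inv j : walk_offset Z j -> P j.
Proof.
case=> v [D0 [T [steps blocks]]].
have walk_v := prev_walk_iter steps; set a0 := v 0%N in walk_v; set i := zidx a0.
have [s0 [K degP]] := ldeg_lprev_iterP (zptV a0).
pose k := maxn (maxn D0 K.+1) `|j|.
have D0k : (D0 <= Lexp i k.+2)%N by have := Lexp_ge i k.+2; lia.
have [lenD degD] := blocks _ D0k.
have leK : (csum i K <= csum i k)%N by apply: csum_mono; lia.
have ltk := csum_ltS i k.
have [TD TD1] : T (Lexp i k.+2) = (csum i k - csum i K + s0)%N /\
                T (Lexp i k.+2).+1 = (csum i k.+1 - csum i K + s0)%N.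
  apply: nat_interval_inj => [||t]; [by have := Lexp_ge i k.+2; lia | lia |].
  by rewrite -degD lim_deg_Zsum walk_v /zdeg zidx_iter zpt_iter degP //; lia.
have := Lcoef_Lexp i k.+2; move: lenD; rewrite TD TD1 /= => lenD lenL.
have -> : j = i by lia.
exact: zidxP.
Qed.
End Zsum.

Theorem mainTheorem5 :
  ~ order_iso I_even I_odd /\ ~ order_iso I_even I_all /\ ~ order_iso I_odd I_all.
Proof.
have I_odd1 : walk_offset I_odd 1 by apply: walk_offset_Zsum.
have I_all1 : walk_offset I_all 1 by apply: walk_offset_Zsum.
have I_all0 : walk_offset I_all 0 by apply: walk_offset_Zsum.
split; [|split]=> iso.
- by move: I_odd1 => /(order_iso_walk_offset 1 iso) /walk_offset_Zsum_inv.
- by move: I_all1 => /(order_iso_walk_offset 1 iso) /walk_offset_Zsum_inv.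
- by move: I_all0 => /(order_iso_walk_offset 0 iso) /walk_offset_Zsum_inv.
Qed.
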